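(* Let $A$ be a finite-dimensional semisimple Hopf algebra over $k$, let $\tau$ be a Hopf automorphism of $A$ of finite order $n$, let $G=\langle\tau\rangle$ and $K=A\natural k^G$. Given an $A$-module $N$, make it a $K$-module $M$ by letting $a\natural p_x$ act as $a$ if $x=\tau^{-1}$ and as $0$ otherwise (so $M_{\tau^{-1}}=N$ and $M_x=0$ for $x\neq\tau^{-1}$). Then for every positive multiple $m$ of $n$, $$\nu^A_{m,\tau}(N)=\nu^K_m(M).$$
   Context: $k$ is algebraically closed of characteristic $0$. $k^G$ has basis $\{p_x\}_{x\in G}$ with $p_xp_y=\delta_{x,y}p_x$. The smash coproduct $K=A\natural k^G$ is $A\otimes k^G$ (elements written $a\natural p_x$) with tensor product algebra structure, comultiplication $\Delta(a\natural p_x)=\sum_{y\in G}(a_1\natural p_y)\otimes((y^{-1}\cdot a_2)\natural p_{y^{-1}x})$, counit $\varepsilon(a\natural p_x)=\delta_{1,x}\varepsilon(a)$, antipode $S(a\natural p_x)=(x^{-1}\cdot S(a))\natural p_{x^{-1}}$. $\Lambda_A$ is the normalized integral of $A$ and $\Lambda_K=\Lambda_A\natural p_1$. For a $K$-module $M$, $M_x=p_x\cdot M$. Hopf powers: $h^{[m]}=\sum h_1\cdots h_m$ and $h^{[m,\sigma]}=\sum h_1(\sigma\cdot h_2)\cdots(\sigma^{m-1}\cdot h_m)$ for a Hopf automorphism $\sigma$. Indicators: $\nu^K_m(V)=\chi_V(\Lambda_K^{[m]})$ for a $K$-module $V$ with character $\chi_V$; $\nu^A_{m,\sigma}(W)=\chi_W(\Lambda_A^{[m,\sigma]})$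 for an $A$-module $W$ and Hopf automorphism $\sigma$ whose order divides $m$. *)

(* Hopf algebras are formalized by structure constants
   with respect to a basis indexed by a finite type I (finite dimension). *)
From HB Require Import structures.
From mathcomp Require Import all_boot all_order all_algebra.
Set Implicit Arguments. Unset Strict Implicit. Unset Printing Implicit Defensive.
Import Order.TTheory GRing.Theory Num.Theory.
Local Open Scope ring_scope.

Section HopfDefs.
Variables (k : fieldType) (I : finType).

Definition vec := {ffun I -> k}.

(* structure constants:
   e_i e_j = sum_l hmul i j l e_l,  1 = sum_l hunit l e_l,
   Delta(e_i) = sum_{j,l} hcomul i j l e_j (x) e_l,
   eps(e_i) = hcounit i,  S(e_i) = hanti i *)
Record hopf_data := HopfData {
  hmul : I -> I -> vec;
  hunit : vec;
  hcomul : I -> I -> I -> k;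
  hcounit : I -> k;
  hanti : I -> vec }.

Variable H : hopf_data.

Definition bvec (i : I) : vec := [ffun j => (i == j)%:R].

Definition mulv (a b : vec) : vec :=
  [ffun l => \sum_i \sum_j a i * b j * hmul H i j l].

Definition counitv (a : vec) : k := \sum_i a i * hcounit H i.

Definition lapp (sigma : I -> vec) (v : vec) : vec :=
  [ffun l => \sum_i v i * sigma i l].

Definition is_hopf : Prop :=
  [/\ (forall a b c, mulv (mulv a b) c = mulv a (mulv b c)) /\
      (forall a, mulv (hunit H) a = a /\ mulv a (hunit H) = a),
      (forall i j l q, \sum_p hcomul H i p q * hcomul H p j l
                        = \sum_p hcomul H i j p * hcomul H p l q),
      (forall i l, \sum_j hcomul H i j l * hcounit H j = (i == l)%:R /\
                   \sum_j hcomul H i l j * hcounit H j = (i == l)%:R),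
      [/\ (forall a b j l,
             \sum_p mulv (bvec a) (bvec b) p * hcomul H p j l
             = \sum_j1 \sum_l1 \sum_j2 \sum_l2
                 hcomul H a j1 l1 * hcomul H b j2 l2
                 * hmul H j1 j2 j * hmul H l1 l2 l),
          (forall j l, \sum_p hunit H p * hcomul H p j l = hunit H j * hunit H l),
          (forall a b, counitv (mulv a b) = counitv a * counitv b) &
          counitv (hunit H) = 1] &
      (forall i q,
         \sum_j \sum_l hcomul H i j l * mulv (hanti H j) (bvec l) q
           = hcounit H i * hunit H q /\
         \sum_j \sum_l hcomul H i j l * mulv (bvec j) (hanti H l) q
           = hcounit H i * hunit H q)].

(* finite-dimensional modules: representations rho : A -> M_r(k),
   given on the basis and extended linearly *)
Definition rep (r : nat) (rho : I -> 'M[k]_r) (v : vec) : 'M[k]_r :=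
  \sum_i v i *: rho i.

Definition is_module (r : nat) (rho : I -> 'M[k]_r) : Prop :=
  rep rho (hunit H) = 1%:M /\
  forall a b, rep rho (mulv a b) = rep rho a *m rep rho b.

Definition character (r : nat) (rho : I -> 'M[k]_r) (v : vec) : k :=
  \tr (rep rho v).

(* a subspace (row space of U, column vectors are U's rows transposed)
   stable under the action v |-> rho(a) v *)
Definition submodule (r : nat) (rho : I -> 'M[k]_r) (U : 'M[k]_r) : bool :=
  [forall i, (U *m (rho i)^T <= U)%MS].

Definition semisimple : Prop :=
  forall (r : nat) (rho : I -> 'M[k]_r), is_module rho ->
  forall U : 'M[k]_r, submodule rho U ->
  exists W : 'M[k]_r, submodule rho W /\
    ((U + W)%MS == 1%:M)%MS /\ ((U :&: W)%MS == (0 : 'M[k]_r))%MS.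

Definition is_hopf_aut (sigma : I -> vec) : Prop :=
  [/\ bijective (lapp sigma),
      lapp sigma (hunit H) = hunit H,
      (forall a b, lapp sigma (mulv a b) = mulv (lapp sigma a) (lapp sigma b)),
      (forall i j l, \sum_p sigma i p * hcomul H p j l
                     = \sum_j' \sum_l' hcomul H i j' l' * sigma j' j * sigma l' l) &
      (forall i, counitv (sigma i) = hcounit H i)].

Definition has_order (sigma : I -> vec) (n : nat) : Prop :=
  [/\ (0 < n)%N,
      (forall v, iter n (lapp sigma) v = v) &
      (forall j, (0 < j < n)%N -> exists v, iter j (lapp sigma) v <> v)].

Definition is_normalized_integral (L : vec) : Prop :=
  counitv L = 1 /\ forall a, mulv a L = [ffun l => counitv a * L l].

(* iterated comultiplication Delta^(m) = (id (x) Delta^(m-1)) o Delta,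
   Delta^(0) = eps; itcomul s h = coefficient of e_{s_1}(x)...(x)e_{s_m} *)
Fixpoint itcomul (s : seq I) (h : vec) : k :=
  match s with
  | [::] => counitv h
  | i :: s' => \sum_j h j * \sum_l hcomul H j i l * itcomul s' (bvec l)
  end.

Definition prodv (l : seq vec) : vec := foldr mulv (hunit H) l.

(* Hopf power h^[m, sigma] = sum h_1 sigma(h_2) ... sigma^(m-1)(h_m) *)
Definition hopf_power (m : nat) (sigma : I -> vec) (h : vec) : vec :=
  [ffun q => \sum_(t : m.-tuple I)
     itcomul t h *
     prodv [seq iter (val j) (lapp sigma) (bvec (tnth t j)) | j <- enum 'I_m] q].

End HopfDefs.

(* ---------- the smash coproduct K = A # k^G, G = <tau> of order n ---------
   Elements of G are tau^x, x : 'I_n (exponent mod n).  Basis of K is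
   e_i # p_x, indexed by I * 'I_n. *)
Section Smash.
Variables (k : fieldType) (I : finType) (H : hopf_data k I)
          (tau : I -> vec k I) (n : nat).

Definition gdiv (y x : 'I_n) : 'I_n := insubd x ((x + n - y) %% n)%N.
Definition ginv (x : 'I_n) : 'I_n := insubd x ((n - x) %% n)%N.
Definition gact (x : 'I_n) (a : vec k I) : vec k I := iter x (lapp tau) a.

Definition smash : hopf_data k (I * 'I_n)%type :=
  HopfData
    (fun ix jy => [ffun lz : (I * 'I_n)%type =>
       ((ix.2 == jy.2) && (lz.2 == ix.2))%:R * hmul H ix.1 jy.1 lz.1])
    [ffun lz : (I * 'I_n)%type => hunit H lz.1]
    (fun ix jy lz =>
       (lz.2 == gdiv jy.2 ix.2)%:R *
       \sum_q hcomul H ix.1 jy.1 q * gact (ginv jy.2) (@bvec k I q) lz.1)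
    (fun ix => (val ix.2 == 0%N)%:R * hcounit H ix.1)
    (fun ix => [ffun lz : (I * 'I_n)%type =>
       (lz.2 == ginv ix.2)%:R * gact (ginv ix.2) (hanti H ix.1) lz.1]).

Definition smash_integral (L : vec k I) : vec k (I * 'I_n)%type :=
  [ffun lz : (I * 'I_n)%type => (val lz.2 == 0%N)%:R * L lz.1].

(* the K-module M built from the A-module N: a # p_x acts as a if
   x = tau^{-1} (exponent n-1), and as 0 otherwise *)
Definition smash_module (r : nat) (rho : I -> 'M[k]_r) : (I * 'I_n)%type -> 'M[k]_r :=
  fun ix => (val ix.2 == n.-1)%:R *: rho ix.1.

End Smash.

From HB Require Import structures.
From mathcomp Require Import all_boot all_order all_algebra.
From mathcomp Require Import ring zify.
Set Implicit Arguments. Unset Strict Implicit. Unset Printing Implicit Defensive.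
Import GRing.Theory.
Local Open Scope ring_scope.

(* In K = A # k^G a product (e_(i_1) # p_(x_1)) ... (e_(i_m) # p_(x_m)) of basis
   vectors vanishes unless all the x_j agree, and M only sees the component
   x = tau^-1.  So the only terms of Delta_K^(m)(Lambda_A # p_1) that matter are
   those whose tensor factors all lie in A # p_(tau^-1).  Splitting a # p_x with
   y = tau^-1 in Delta(a # p_x) = sum_y (a_1 # p_y) (x) (y^-1 . a_2 # p_(y^-1 x))
   applies tau to the right factor and moves its label from x to tau x; since
   tau is a coalgebra map, the j-th factor ends up as tau^(j-1) of the j-th leg
   of Delta^(m)(Lambda_A), and the last label is tau^(m-1), which is tau^-1
   exactly when n | m.  Hence the tau^-1-component of Lambda_K^[m] is
   Lambda_A^[m,tau]. *)

Section SumSeq.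
Variables (V : nmodType) (T : finType).

Fixpoint sumseq (p : nat) (F : seq T -> V) : V :=
  if p is p'.+1 then \sum_i sumseq p' (fun s => F (i :: s)) else F [::].

Lemma sumseqS p (F : seq T -> V) :
  sumseq p.+1 F = \sum_i sumseq p (fun s => F (i :: s)).
Proof. by []. Qed.

Lemma sumseq_tuple p (F : seq T -> V) :
  \sum_(t : p.-tuple T) F t = sumseq p F.
Proof.
elim: p F => [|p IH] F /=.
  rewrite (big_pred1 [tuple]) // => t; apply/esym/eqP; exact: tuple0.
rewrite (reindex (fun x : T * p.-tuple T => [tuple of x.1 :: x.2])) /=; last first.
  exists (fun t : p.+1.-tuple T => (thead t, [tuple of behead t])).
    by case=> a t /=; rewrite [X in (_, X)](_ : _ = t) //; apply: val_inj.
  by move=> t _; apply: val_inj; case: t => [[|a s]].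
rewrite -(pair_bigA _ (fun a t => F (a :: val t))) /=.
by apply: eq_bigr => i _; apply: IH.
Qed.

Lemma eq_sumseq_size p (F G : seq T -> V) :
  (forall s, size s = p -> F s = G s) -> sumseq p F = sumseq p G.
Proof.
elim: p F G => [|p IH] F G eqFG /=; first exact: eqFG.
by apply: eq_bigr => i _; apply: IH => s sz_s; apply: eqFG; rewrite /= sz_s.
Qed.

Lemma eq_sumseq p (F G : seq T -> V) : F =1 G -> sumseq p F = sumseq p G.
Proof. by move=> eqFG; apply: eq_sumseq_size => s _; apply: eqFG. Qed.

Lemma sumseq_sum (J : finType) p (F : J -> seq T -> V) :
  sumseq p (fun s => \sum_j F j s) = \sum_j sumseq p (F j).
Proof.
elim: p F => [|p IH] F //=.
by under eq_bigr do rewrite IH; apply: exchange_big.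
Qed.

Lemma exchange_sumseq p q (F : seq T -> seq T -> V) :
  sumseq p (fun s => sumseq q (F s)) = sumseq q (fun u => sumseq p (F^~ u)).
Proof.
elim: p F => [|p IH] F //=.
by under eq_bigr do rewrite IH; rewrite -sumseq_sum.
Qed.

End SumSeq.

Section SumSeqRing.
Variables (R : pzRingType) (T : finType).

Lemma mulr_sumseqr p (F : seq T -> R) a :
  a * sumseq p F = sumseq p (fun s => a * F s).
Proof. by elim: p F => [|p IH] F //=; rewrite mulr_sumr; apply: eq_bigr. Qed.

Lemma mulr_sumseql p (F : seq T -> R) a :
  sumseq p F * a = sumseq p (fun s => F s * a).
Proof. by elim: p F => [|p IH] F //=; rewrite mulr_suml; apply: eq_bigr. Qed.

Lemma sum_delta (J : finType) (w : J) (F : J -> R) :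
  \sum_v (v == w)%:R * F v = F w.
Proof.
rewrite (bigD1 w) //= eqxx mul1r big1 ?addr0 // => v /negPf ->; exact: mul0r.
Qed.

Lemma sum_ord_delta n x (x_lt_n : (x < n)%N) (F : 'I_n -> R) :
  \sum_(y : 'I_n) (val y == x)%:R * F y = F (Ordinal x_lt_n).
Proof. by rewrite -(sum_delta (Ordinal x_lt_n)). Qed.

End SumSeqRing.

Lemma sum_pair (V : nmodType) (I J : finType) (F : I * J -> V) :
  \sum_p F p = \sum_i \sum_j F (i, j).
Proof. by rewrite pair_bigA; apply: eq_bigr => -[]. Qed.

Lemma sumseq_all_snd (V : pzRingType) (I J : finType) (z : J) p
    (G : seq (I * J) -> V) :
  sumseq p (fun T => (all (fun q => q.2 == z) T)%:R * G T)
  = sumseq p (fun u => G (map (fun i => (i, z)) u)).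
Proof.
elim: p G => [|p IH] G /=; first by rewrite mul1r.
rewrite sum_pair; apply: eq_bigr => i _.
rewrite -(IH (fun T => G ((i, z) :: T))).
rewrite -(sum_delta z (fun y =>
  sumseq p (fun T => (all (fun q => q.2 == z) T)%:R * G ((i, y) :: T)))).
apply: eq_bigr => y _; rewrite mulr_sumseqr; apply: eq_sumseq => T /=.
by case: (y == z); rewrite ?mul1r ?mul0r.
Qed.

Lemma sum_bilinear (R : comRingType) (T : finType) (a A B : T -> T -> R)
    (f g : T -> R) :
  \sum_i \sum_j (\sum_x A i x * f x) * a i j * (\sum_y B j y * g y)
  = \sum_x \sum_y f x * (\sum_i \sum_j a i j * A i x * B j y) * g y.
Proof.
under eq_bigr do under eq_bigr do rewrite mulr_suml big_distrlr /=.
under eq_bigr do rewrite exchange_big /=.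
under eq_bigr do under eq_bigr do rewrite exchange_big /=.
rewrite exchange_big /=; under eq_bigr do rewrite exchange_big /=.
apply: eq_bigr => x _; apply: eq_bigr => y _.
rewrite mulr_sumr mulr_suml; apply: eq_bigr => i _.
by rewrite mulr_sumr mulr_suml; apply: eq_bigr => j _; ring.
Qed.

Section Basis.
Variables (k : fieldType) (T : finType).

Lemma sum_bvecl (l : T) (F : T -> k) : \sum_j bvec k l j * F j = F l.
Proof. by rewrite -(sum_delta l); apply: eq_bigr => j _; rewrite ffunE eq_sym. Qed.

Lemma lapp_bvec (sigma : T -> vec k T) j : lapp sigma (bvec k j) = sigma j.
Proof. by apply/ffunP => l; rewrite ffunE sum_bvecl. Qed.

Lemma sum_coord_bvec (v : vec k T) l : \sum_i v i * bvec k i l = v l.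
Proof. by rewrite -(sum_delta l v); apply: eq_bigr => i _; rewrite ffunE mulrC. Qed.

Lemma lapp_id (v : vec k T) : lapp (@bvec k T) v = v.
Proof. by apply/ffunP => l; rewrite ffunE sum_coord_bvec. Qed.

Lemma iter_lapp_lin (sigma : T -> vec k T) c v l :
  iter c (lapp sigma) v l = \sum_i v i * iter c (lapp sigma) (bvec k i) l.
Proof.
elim: c v l => [|c IH] v l /=; first by rewrite sum_coord_bvec.
rewrite ffunE; under [RHS]eq_bigr do rewrite ffunE mulr_sumr.
rewrite exchange_big; apply: eq_bigr => j _ /=.
by rewrite IH mulr_suml; apply: eq_bigr => i _; rewrite mulrA.
Qed.

End Basis.

Section HopfBasics.
Variables (k : fieldType) (I : finType) (H : hopf_data k I).
Local Notation e := (@bvec k I).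

Definition comulv (h : vec k I) (i j : I) : k := \sum_p h p * hcomul H p i j.

Lemma itcomul_cons i s h :
  itcomul H (i :: s) h = \sum_l comulv h i l * itcomul H s (e l).
Proof.
rewrite /= /comulv; under eq_bigr do rewrite mulr_sumr.
rewrite exchange_big; apply: eq_bigr => l _ /=; rewrite mulr_suml.
by apply: eq_bigr => j _; rewrite mulrA.
Qed.

Lemma itcomul_lin s h : itcomul H s h = \sum_l h l * itcomul H s (e l).
Proof.
case: s => [|i s] /=; first by apply: eq_bigr => l _; rewrite /counitv sum_bvecl.
by apply: eq_bigr => l _; rewrite sum_bvecl.
Qed.

Lemma mulv_bvecl u w q : mulv H (e u) w q = \sum_j w j * hmul H u j q.
Proof.
rewrite ffunE -(sum_bvecl u (fun i => \sum_j w j * hmul H i j q)).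
by apply: eq_bigr => i _; rewrite mulr_sumr; apply: eq_bigr => j _; rewrite mulrA.
Qed.

Lemma mulv_lin a w q : mulv H a w q = \sum_u a u * mulv H (e u) w q.
Proof.
rewrite ffunE; apply: eq_bigr => u _; rewrite mulv_bvecl mulr_sumr.
by apply: eq_bigr => j _; rewrite mulrA.
Qed.

Lemma mulv_sumseqr p a (w : vec k I) (f : seq I -> k) (G : seq I -> vec k I) q :
  (forall j, w j = sumseq p (fun u => f u * G u j)) ->
  mulv H a w q = sumseq p (fun u => f u * mulv H a (G u) q).
Proof.
move=> def_w; rewrite ffunE.
under eq_bigr do under eq_bigr do rewrite def_w mulr_sumseqr mulr_sumseql.
under eq_bigr do rewrite -sumseq_sum.
rewrite -sumseq_sum; apply: eq_sumseq => u; rewrite ffunE mulr_sumr.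
by apply: eq_bigr => i _; rewrite mulr_sumr; apply: eq_bigr => j _; ring.
Qed.

End HopfBasics.

Section Twisted.
Variables (k : fieldType) (I : finType) (H : hopf_data k I) (tau : I -> vec k I).
Local Notation e := (@bvec k I).

Fixpoint twisted c (s : seq I) : seq (vec k I) :=
  if s is i :: s' then iter c (lapp tau) (e i) :: twisted c.+1 s' else [::].

Fixpoint twist_coef c (t s : seq I) : k :=
  match t, s with
  | t0 :: t', s0 :: s' => iter c (lapp tau) (e t0) s0 * twist_coef c.+1 t' s'
  | _, _ => 1
  end.

Lemma twisted_iota x0 s c :
  twisted c s =
  [seq iter (c + i) (lapp tau) (e (nth x0 s i)) | i <- iota 0 (size s)].
Proof.
elim: s c => [|a s IH] c //=; rewrite addn0 (IH c.+1) -[1%N]addn0 iotaDl -map_comp.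
by congr (_ :: _); apply: eq_map => i /=; rewrite add1n addnS.
Qed.

Lemma twisted_tuple m (t : m.-tuple I) :
  twisted 0 t = [seq iter (val j) (lapp tau) (e (tnth t j)) | j <- enum 'I_m].
Proof.
case: m t => [|m] t; first by rewrite tuple0 enum_ord0.
rewrite (twisted_iota (thead t)) size_tuple -val_enum_ord -map_comp.
by apply: eq_map => j /=; rewrite (tnth_nth (thead t)).
Qed.

Lemma prodv_twisted t c q :
  prodv H (twisted c t) q =
  sumseq (size t) (fun u => twist_coef c t u * prodv H (map e u) q).
Proof.
elim: t c q => [|t0 t IH] c q /=; first by rewrite mul1r.
rewrite mulv_lin; apply: eq_bigr => u _.
rewrite (@mulv_sumseqr _ _ _ (size t) _ _ (twist_coef c.+1 t)
          (fun u => prodv H (map e u))) => [|j]; last exact: IH.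
by rewrite mulr_sumseqr; apply: eq_sumseq => u' /=; ring.
Qed.

(* [tcomul c s h] is the coefficient of [e_(s_1) (x) ... (x) e_(s_m)] in
   [(tau^c (x) tau^(c+1) (x) ... (x) tau^(c+m-1)) Delta^(m) h]. *)
Definition tcomul c s h :=
  sumseq (size s) (fun t => itcomul H t h * twist_coef c t s).

Lemma tcomul_nil c h : tcomul c [::] h = counitv H h.
Proof. by rewrite /tcomul /= mulr1. Qed.

Lemma tcomul_lin c s h : tcomul c s h = \sum_l h l * tcomul c s (e l).
Proof.
rewrite /tcomul; under [RHS]eq_bigr do rewrite mulr_sumseqr.
rewrite -sumseq_sum; apply: eq_sumseq => t.
by rewrite itcomul_lin mulr_suml; apply: eq_bigr => l _; rewrite mulrA.
Qed.

Lemma tcomul_cons c i s h :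
  tcomul c (i :: s) h =
  \sum_t0 \sum_l iter c (lapp tau) (e t0) i * comulv H h t0 l * tcomul c.+1 s (e l).
Proof.
rewrite /tcomul sumseqS; apply: eq_bigr => t0 _.
under eq_sumseq => t do rewrite itcomul_cons /= mulr_suml.
rewrite sumseq_sum; apply: eq_bigr => l _.
by rewrite mulr_sumseqr; apply: eq_sumseq => t; ring.
Qed.

Lemma hopf_power_tcomul m h q :
  hopf_power H m tau h q =
  sumseq m (fun u => tcomul 0 u h * prodv H (map e u) q).
Proof.
rewrite /hopf_power ffunE.
transitivity (sumseq m (fun t => itcomul H t h * prodv H (twisted 0 t) q)).
  by rewrite -sumseq_tuple; apply: eq_bigr => t _; rewrite twisted_tuple.
rewrite (eq_sumseq_size (G := fun t => sumseq m (fun u =>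
           itcomul H t h * twist_coef 0 t u * prodv H (map e u) q))) => [|t sz_t].
  rewrite exchange_sumseq; apply: eq_sumseq_size => u sz_u.
  by rewrite /tcomul sz_u mulr_sumseql.
by rewrite prodv_twisted sz_t mulr_sumseqr; apply: eq_sumseq => u; rewrite mulrA.
Qed.

End Twisted.

Section CoalgebraAut.
Variables (k : fieldType) (I : finType) (H : hopf_data k I) (tau : I -> vec k I).
Local Notation e := (@bvec k I).
Hypothesis tau_comul : forall i j l,
  \sum_p tau i p * hcomul H p j l
  = \sum_j' \sum_l' hcomul H i j' l' * tau j' j * tau l' l.
Hypothesis tau_counit : forall i, counitv H (tau i) = hcounit H i.

Lemma counitv_lapp b : counitv H (lapp tau b) = counitv H b.
Proof.
rewrite /counitv; under eq_bigr do rewrite ffunE mulr_suml.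
rewrite exchange_big; apply: eq_bigr => j _ /=.
by rewrite -tau_counit /counitv mulr_sumr; apply: eq_bigr => x _; rewrite mulrA.
Qed.

Lemma comulv_lapp b x y :
  comulv H (lapp tau b) x y = \sum_i \sum_j comulv H b i j * tau i x * tau j y.
Proof.
transitivity (\sum_i b i * \sum_p tau i p * hcomul H p x y).
  rewrite /comulv; under eq_bigr do rewrite ffunE mulr_suml.
  rewrite exchange_big; apply: eq_bigr => i _ /=; rewrite mulr_sumr.
  by apply: eq_bigr => p _; rewrite mulrA.
under eq_bigr do rewrite tau_comul mulr_sumr.
rewrite exchange_big; apply: eq_bigr => j _ /=.
under eq_bigr do rewrite mulr_sumr.
rewrite exchange_big; apply: eq_bigr => l _ /=.
by rewrite /comulv !mulr_suml; apply: eq_bigr => i _; ring.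
Qed.

Lemma tcomul_shift s c b : tcomul H tau c.+1 s b = tcomul H tau c s (lapp tau b).
Proof.
elim: s c b => [|i s IH] c b; first by rewrite !tcomul_nil counitv_lapp.
rewrite !tcomul_cons.
have iterS t0 : iter c.+1 (lapp tau) (e t0) i
              = \sum_x tau t0 x * iter c (lapp tau) (e x) i.
  by rewrite iterSr lapp_bvec iter_lapp_lin.
have tcomulS l : tcomul H tau c.+2 s (e l)
               = \sum_y tau l y * tcomul H tau c.+1 s (e y).
  by rewrite IH tcomul_lin lapp_bvec.
under eq_bigr do under eq_bigr do rewrite iterS tcomulS.
under [RHS]eq_bigr do under eq_bigr do rewrite comulv_lapp.
exact: sum_bilinear.
Qed.

End CoalgebraAut.

Section Smash.
Variables (k : fieldType) (I : finType) (H : hopf_data k I) (tau : I -> vec k I)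
  (n : nat).
Local Notation e := (@bvec k I).
Local Notation K := (smash H tau n).
Local Notation eK := (@bvec k (I * 'I_n)%type).

Lemma prodv_smash_bvec (l : seq (I * 'I_n)) (q : I) (y : 'I_n) :
  prodv K (map eK l) (q, y) =
  (all (fun p => p.2 == y) l)%:R * prodv H (map (fun p => e p.1) l) q.
Proof.
elim: l q => [|[i x] l IH] q /=; first by rewrite ffunE mul1r.
rewrite !mulv_bvecl sum_pair.
transitivity ((y == x)%:R * \sum_c prodv K (map eK l) (c, x) * hmul H i c q).
  rewrite mulr_sumr; apply: eq_bigr => c _.
  rewrite (bigD1 x) //= big1 => [|d /negPf d_ne_x]; last first.
    by rewrite ffunE /= eq_sym d_ne_x /= mul0r mulr0.
  by rewrite ffunE /= eqxx addr0; case: (y == x); rewrite /= ?mul1r ?mul0r ?mulr0.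
case: (eqVneq y x) => [<-|_]; last by rewrite !mul0r.
by rewrite mul1r mulr_sumr; apply: eq_bigr => c _; rewrite IH mulrA.
Qed.

(* [smashp h x] is [h # p_(tau^x)]. *)
Definition smashp (h : vec k I) (x : nat) : vec k (I * 'I_n)%type :=
  [ffun p => (val p.2 == x)%:R * h p.1].

Lemma bvec_smashp l (v : 'I_n) : eK (l, v) = smashp (e l) (val v).
Proof.
apply/ffunP => -[a b]; rewrite !ffunE /= xpair_eqE.
case: (eqVneq v b) => [->|v_ne_b]; first by rewrite eqxx mul1r andbT.
by rewrite andbF (_ : val b == val v = false) ?mul0r // eq_sym; apply/negbTE.
Qed.

Section LastComponent.
Variable z : 'I_n.
Hypothesis val_z : val z = n.-1.
Hypothesis tau_order : forall v, iter n (lapp tau) v = v.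
Hypothesis tau_comul : forall i j l,
  \sum_p tau i p * hcomul H p j l
  = \sum_j' \sum_l' hcomul H i j' l' * tau j' j * tau l' l.
Hypothesis tau_counit : forall i, counitv H (tau i) = hcounit H i.

Let n_gt0 : (0 < n)%N := leq_ltn_trans (leq0n z) (ltn_ord z).

Lemma gact_ginv_last v : gact tau (ginv z) v = lapp tau v.
Proof.
rewrite /gact /ginv val_insubd ltn_pmod // val_z.
have -> : (n - n.-1 = 1)%N by lia.
have [n1 | n_ne1] := eqVneq n 1%N.
  by rewrite n1 modnn /=; have := tau_order v; rewrite n1.
by rewrite modn_small // ltn_neqAle eq_sym n_ne1.
Qed.

Lemma comulv_smashp h x (x_lt_n : (x < n)%N) i l v :
  comulv K (smashp h x) (i, z) (l, v) =
  (v == gdiv z (Ordinal x_lt_n))%:R * \sum_q comulv H h i q * tau q l.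
Proof.
transitivity (\sum_j h j * hcomul K (j, Ordinal x_lt_n) (i, z) (l, v)).
  rewrite /comulv sum_pair; apply: eq_bigr => j _.
  rewrite -(sum_ord_delta x_lt_n (fun y => h j * hcomul K (j, y) (i, z) (l, v))).
  by apply: eq_bigr => y _; rewrite ffunE -mulrA.
rewrite /=; under eq_bigr do rewrite mulrCA.
rewrite -mulr_sumr; congr (_ * _).
under [LHS]eq_bigr do rewrite mulr_sumr.
rewrite exchange_big; apply: eq_bigr => q _ /=.
rewrite gact_ginv_last lapp_bvec /comulv mulr_suml.
by apply: eq_bigr => j _; rewrite mulrA.
Qed.

Lemma itcomul_smash_last s h x : (x < n)%N ->
  itcomul K (map (fun i => (i, z)) s) (smashp h x)
  = ((x + size s) %% n == 0)%N%:R * tcomul H tau 0 s h.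
Proof.
elim: s x h => [|i s IH] x h x_lt_n.
  rewrite /= tcomul_nil addn0 modn_small // /counitv sum_pair mulr_sumr.
  apply: eq_bigr => j _.
  rewrite -(sum_ord_delta x_lt_n (fun y => (val y == 0)%:R * (h j * hcounit H j))).
  by apply: eq_bigr => y _; rewrite ffunE /=; ring.
set X := Ordinal x_lt_n.
have mod_gdiv : ((gdiv z X + size s) %% n = (x + size (i :: s)) %% n)%N.
  by rewrite /gdiv val_insubd ltn_pmod // val_z /= modnDml; congr (_ %% _)%N; lia.
have IHv l (v : 'I_n) : itcomul K (map (fun i => (i, z)) s) (eK (l, v))
    = ((v + size s) %% n == 0)%N%:R * tcomul H tau 0 s (e l).
  by rewrite bvec_smashp (IH _ _ (ltn_ord v)).
rewrite map_cons itcomul_cons sum_pair tcomul_cons.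
under eq_bigr do under eq_bigr do rewrite comulv_smashp IHv -mulrA.
under eq_bigr do rewrite sum_delta mod_gdiv.
under [in RHS]eq_bigr do under eq_bigr do rewrite -mulrA /=.
under [in RHS]eq_bigr do rewrite -mulr_sumr ffunE.
rewrite sum_delta.
under [in RHS]eq_bigr do
  rewrite tcomul_shift // lapp_bvec tcomul_lin mulr_sumr.
rewrite exchange_big mulr_sumr; apply: eq_bigr => l _ /=.
by rewrite !mulr_suml mulr_sumr; apply: eq_bigr => q _; ring.
Qed.

Lemma hopf_power_smash_last m h q :
  hopf_power K m eK (smashp h 0) (q, z) = (n %| m)%:R * hopf_power H m tau h q.
Proof.
rewrite (hopf_power_tcomul H tau) /hopf_power ffunE.
transitivity (sumseq m (fun T => itcomul K T (smashp h 0) * prodv K (map eK T) (q, z))).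
  rewrite -sumseq_tuple; apply: eq_bigr => T _; congr (_ * prodv _ _ _).
  rewrite -[in RHS](map_tnth_enum T) -map_comp; apply: eq_map => j /=.
  by elim: (nat_of_ord j) => //= j' ->; rewrite lapp_id.
under eq_sumseq do rewrite prodv_smash_bvec mulrCA.
rewrite sumseq_all_snd mulr_sumseqr; apply: eq_sumseq_size => u sz_u.
by rewrite itcomul_smash_last // add0n sz_u -map_comp mulrA.
Qed.

Lemma character_smash_module r (rho : I -> 'M[k]_r) (v : vec k (I * 'I_n)%type) :
  character (smash_module (n := n) rho) v = character rho [ffun q => v (q, z)].
Proof.
rewrite /character /rep sum_pair; congr (\tr _); apply: eq_bigr => i _.
under eq_bigr do rewrite scalerA.
rewrite /= -scaler_suml ffunE -val_z; congr (_ *: _).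
by rewrite -(sum_delta z (fun y => v (i, y))); apply: eq_bigr => y _; rewrite mulrC.
Qed.

End LastComponent.
End Smash.

Theorem theorem4p2 (k : closedFieldType) (I : finType) (H : hopf_data k I)
  (tau : I -> vec k I) (n : nat) (L : vec k I)
  (r : nat) (rhoN : I -> 'M[k]_r) (m : nat) :
  [pchar k] =i pred0 ->
  is_hopf H -> semisimple H ->
  is_hopf_aut H tau -> has_order tau n ->
  is_normalized_integral H L ->
  is_module H rhoN ->
  (0 < m)%N -> (n %| m)%N ->
  character rhoN (hopf_power H m tau L)
  = character (smash_module (n := n) rhoN)
      (hopf_power (smash H tau n) m (@bvec k (I * 'I_n)%type)
         (smash_integral n L)).
Proof.
move=> _ _ _ [_ _ _ tau_comul tau_counit] [n_gt0 tau_order _] _ _ _ n_dvd_m.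
have last_lt_n : (n.-1 < n)%N by rewrite ltn_predL.
pose z := Ordinal last_lt_n.
have val_z : val z = n.-1 by [].
rewrite (character_smash_module val_z); congr (character rhoN _).
apply/ffunP => q; rewrite ffunE.
by rewrite (hopf_power_smash_last val_z tau_order tau_comul tau_counit) n_dvd_m mul1r.
Qed.
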